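(* Let $F:\mathbf{C}\rightleftarrows\mathbf{D}:G$ be an adjunction ($F$ left adjoint to $G$). (a) If $\mathbf{D}$ has the Ramsey property for morphisms, then so does $\mathbf{C}$. (b) If $\mathbf{C}$ has the dual Ramsey property for morphisms, then so does $\mathbf{D}$.
   Context: For objects $\mathcal{A},\mathcal{B}$ of a category, $\hom(\mathcal{A},\mathcal{B})$ is the set of morphisms $\mathcal{A}\to\mathcal{B}$; write $\mathcal{A}\to\mathcal{B}$ if it is nonempty. A $k$-coloring of a set $S$ is a decomposition $S=\mathcal{M}_1\cup\dots\cup\mathcal{M}_k$ into pairwise disjoint sets. For $k\ge2$, $\mathcal{C}\overset{hom}{\longrightarrow}(\mathcal{B})^{\mathcal{A}}_k$ means $\mathcal{A}\to\mathcal{B}\to\mathcal{C}$ and for every $k$-coloring of $\hom(\mathcal{A},\mathcal{C})$ there are $i$ and a morphism $w:\mathcal{B}\to\mathcal{C}$ with $w\cdot\hom(\mathcal{A},\mathcal{B})\subseteq\mathcal{M}_i$. A category has the Ramsey property for morphisms if for every $k\ge2$ and all objects $\mathcal{A},\mathcal{B}$ with $\mathcal{A}\to\mathcal{B}$ there is an object $\mathcal{C}$ with $\mathcal{C}\overset{hom}{\longrightarrow}(\mathcal{B})^{\mathcal{A}}_k$. A category $\mathbf{C}$ has the dual Ramsey property for morphisms if its opposite category $\mathbf{C}^{\mathrm{op}}$ has the Ramsey property for morphisms. *)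

Set Implicit Arguments.

(* A (locally small) category; morphism equality is Leibniz equality.
   [comp g f] is "g after f", written g . f in the paper. *)
Record Category := {
  Obj :> Type;
  Hom : Obj -> Obj -> Type;
  idm : forall A, Hom A A;
  comp : forall A B C, Hom B C -> Hom A B -> Hom A C;
  comp_assoc : forall A B C D (h : Hom C D) (g : Hom B C) (f : Hom A B),
      comp h (comp g f) = comp (comp h g) f;
  comp_id_l : forall A B (f : Hom A B), comp (idm B) f = f;
  comp_id_r : forall A B (f : Hom A B), comp f (idm A) = f
}.

Arguments Hom {c} _ _.
Arguments idm {c} _.
Arguments comp {c A B C} _ _.

Definition op (C : Category) : Category :=
  {| Obj := Obj C;
     Hom := fun A B => @Hom C B A;
     idm := fun A => @idm C A;
     comp := fun A B D (g : @Hom C D B) (f : @Hom C B A) => @comp C D B A f g;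
     comp_assoc := fun A B D E h g f =>
        eq_sym (@comp_assoc C E D B A f g h);
     comp_id_l := fun A B f => @comp_id_r C B A f;
     comp_id_r := fun A B f => @comp_id_l C B A f |}.

Record Functor (C D : Category) := {
  fobj :> Obj C -> Obj D;
  fmap : forall A B, @Hom C A B -> @Hom D (fobj A) (fobj B);
  fmap_id : forall A, fmap A A (@idm C A) = @idm D (fobj A);
  fmap_comp : forall A B E (g : @Hom C B E) (f : @Hom C A B),
      fmap A E (@comp C A B E g f) = @comp D _ _ _ (fmap B E g) (fmap A B f)
}.

Arguments fmap {C D} _ {A B} _.

Record Adjunction (C D : Category) (F : Functor C D) (G : Functor D C) := {
  adj_phi : forall (X : Obj C) (Y : Obj D), @Hom D (F X) Y -> @Hom C X (G Y);
  adj_psi : forall (X : Obj C) (Y : Obj D), @Hom C X (G Y) -> @Hom D (F X) Y;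
  adj_psi_phi : forall X Y (h : @Hom D (F X) Y), adj_psi X Y (adj_phi X Y h) = h;
  adj_phi_psi : forall X Y (k : @Hom C X (G Y)), adj_phi X Y (adj_psi X Y k) = k;
  adj_natural : forall (X X' : Obj C) (Y Y' : Obj D)
      (f : @Hom C X' X) (g : @Hom D Y Y') (h : @Hom D (F X) Y),
      adj_phi X' Y' (comp g (comp h (fmap F f))) = comp (fmap G g) (comp (adj_phi X Y h) f)
}.

Definition arrow (C : Category) (A B : Obj C) : Prop := inhabited (@Hom C A B).

(* A k-coloring of hom(A,C) is a map chi : hom(A,C) -> {0,..,k-1}
   (the colour classes M_i = chi^{-1}(i) form the decomposition).
   C --hom--> (B)^A_k : *)
Definition ramsey_arrow (Cat : Category) (C B A : Obj Cat) (k : nat) : Prop :=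
  @arrow Cat A B /\ @arrow Cat B C /\
  forall chi : @Hom Cat A C -> nat, (forall f, chi f < k) ->
    exists i : nat, exists w : @Hom Cat B C,
      forall f : @Hom Cat A B, chi (comp w f) = i.

Definition RamseyPropertyMorphisms (Cat : Category) : Prop :=
  forall k : nat, 2 <= k ->
  forall A B : Obj Cat, @arrow Cat A B ->
  exists C : Obj Cat, @ramsey_arrow Cat C B A k.

Definition DualRamseyPropertyMorphisms (Cat : Category) : Prop :=
  RamseyPropertyMorphisms (op Cat).


(* The transposition [h |-> adj_phi h] is a bijection hom(F A, E) ~= hom(A, G E)
   compatible with precomposition, so a colouring of hom(A, G E) pulls back to a
   colouring of hom(F A, E); a monochromatic copy [w . hom(F A, F B)] there
   transposes to the monochromatic copy [phi w . hom(A, B)].  Part (b) is part (a)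
   for the opposite adjunction G^op -| F^op : D^op -> C^op. *)

Definition op_functor {C D : Category} (F : Functor C D) : Functor (op C) (op D) :=
  @Build_Functor (op C) (op D) F (fun A B f => @fmap C D F B A f)
    (fun A => fmap_id F A) (fun A B E g f => fmap_comp F E B A f g).

Lemma arrow_fmap {C D : Category} (F : Functor C D) {A B : Obj C} :
  @arrow C A B -> @arrow D (F A) (F B).
Proof. intros [f]; exact (inhabits (fmap F f)). Qed.

Section AdjunctionFacts.

Context {C D : Category} {F : Functor C D} {G : Functor D C} (adj : Adjunction F G).

Lemma adj_phi_comp_fmap (A B : Obj C) (E : Obj D) (w : @Hom D (F B) E) (f : @Hom C A B) :
  adj_phi adj A E (comp w (fmap F f)) = comp (adj_phi adj B E w) f.
Proof.
  pose proof (adj_natural adj _ _ _ _ f (idm E) w) as N.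
  now rewrite comp_id_l, fmap_id, comp_id_l in N.
Qed.

Lemma adj_psi_natural (X X' : Obj C) (Y Y' : Obj D)
  (f : @Hom C X' X) (g : @Hom D Y Y') (k : @Hom C X (G Y)) :
  adj_psi adj X' Y' (comp (fmap G g) (comp k f)) = comp g (comp (adj_psi adj X Y k) (fmap F f)).
Proof.
  set (h := adj_psi adj X Y k).
  replace k with (adj_phi adj X Y h) by apply adj_phi_psi.
  now rewrite <- adj_natural, adj_psi_phi.
Qed.

Definition op_adjunction : Adjunction (op_functor G) (op_functor F).
Proof.
  refine (@Build_Adjunction (op D) (op C) (op_functor G) (op_functor F)
            (fun Y X => adj_psi adj X Y) (fun Y X => adj_phi adj X Y)
            (fun Y X => adj_phi_psi adj X Y) (fun Y X => adj_psi_phi adj X Y) _).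
  intros Y Y' X X' g f k; cbn in *.
  rewrite <- comp_assoc, adj_psi_natural.
  now rewrite comp_assoc.
Defined.

Lemma ramsey_arrow_right_adjoint (E : Obj D) (A B : Obj C) (k : nat) :
  @arrow C A B -> @ramsey_arrow D E (F B) (F A) k -> @ramsey_arrow C (G E) B A k.
Proof.
  intros AB [_ [[v] Hramsey]].
  split; [exact AB | split; [exact (inhabits (adj_phi adj B E v)) |]].
  intros chi Hchi.
  destruct (Hramsey (fun h => chi (adj_phi adj A E h)) (fun h => Hchi _))
    as [i [w Hw]].
  exists i, (adj_phi adj B E w); intros f.
  rewrite <- adj_phi_comp_fmap; apply Hw.
Qed.

Lemma ramsey_property_left_adjoint :
  RamseyPropertyMorphisms D -> RamseyPropertyMorphisms C.
Proof.
  intros HD k Hk A B AB.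
  destruct (HD k Hk (F A) (F B) (arrow_fmap F AB)) as [E HE].
  exists (G E); now apply ramsey_arrow_right_adjoint.
Qed.

End AdjunctionFacts.

Theorem theorem3p1 (C D : Category) (F : Functor C D) (G : Functor D C)
  (adj : Adjunction F G) :
  (RamseyPropertyMorphisms D -> RamseyPropertyMorphisms C) /\
  (DualRamseyPropertyMorphisms C -> DualRamseyPropertyMorphisms D).
Proof.
  split.
  - exact (ramsey_property_left_adjoint adj).
  - exact (ramsey_property_left_adjoint (op_adjunction adj)).
Qed.
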